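(* There exist an environment $E$ and a total preorder $\succeq$ on $\Pi^E$ such that $\succeq\in\mathrm{Ord}_{\mathrm{ONMR}}(E)$ but $\succeq\notin\mathrm{Ord}_{\mathrm{FTR}}(E)$.
   Context: An environment is a tuple $E=(\mathcal S,\mathcal A,\mathcal T,\mathcal I)$ where $\mathcal S,\mathcal A$ are finite nonempty sets, $\mathcal T:\mathcal S\times\mathcal A\to\Delta(\mathcal S)$ and $\mathcal I\in\Delta(\mathcal S)$. A policy is a map $\pi:\mathcal S\to\Delta(\mathcal A)$ (stationary, possibly stochastic); $\Pi^E$ denotes the set of all policies. A trajectory $\xi=(s_0,a_0,s_1,a_1,\dots)\in\Xi:=\mathcal S\times(\mathcal A\times\mathcal S)^\omega$ is generated under $\pi$ by $s_0\sim\mathcal I$, $a_t\sim\pi(s_t)$, $s_{t+1}\sim\mathcal T(s_t,a_t)$; $\mathbb E^\pi_\xi$ denotes expectation under this distribution. An objective-specification formalism $X$ assigns to each environment $E$ a set of objective specifications, each inducing a total preorder $\succeq$ on $\Pi^E$; $\mathrm{Ord}_X(E)$ is the set of total preorders so induced. A specification defining a scalar $J:\Pi^E\to\mathbb R$ induces $\pi_1\succeq\pi_2\iff J(\pi_1)\ge J(\pi_2)$. ONMR: specification $(\mathcal R,f,\gamma)$ with $\mathcal R:\mathcal S\times\mathcal A\times\mathcal S\to\mathbb R$, $f:\mathbb R\to\mathbb R$, $\gamma\in[0,1)$; $J(\pi)=f\big(\mathbb E^\pi_\xi[\sum_{t=0}^\infty\gamma^t\mathcal R(s_t,a_t,s_{t+1})]\big)$.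 FTR: specification $(f)$ with $f:\Xi\to\mathbb R$ Borel measurable (product topology on $\Xi$) such that $\mathbb E^\pi_\xi[f(\xi)]$ is well-defined and finite for every policy; $J(\pi)=\mathbb E^\pi_\xi[f(\xi)]$. *)

From HB Require Import structures.
From mathcomp Require Import all_boot all_order all_algebra.
From mathcomp Require Import all_classical all_reals all_analysis.
Set Implicit Arguments. Unset Strict Implicit. Unset Printing Implicit Defensive.
Import Order.TTheory GRing.Theory Num.Theory.
Local Open Scope classical_set_scope.
Local Open Scope ring_scope.

(* Finite nonempty types: a finType together with a point (the point only
   witnesses nonemptiness). *)
#[short(type="fpType")]
HB.structure Definition FinPointed := {T of Finite T & isPointed T}.

Section Defs.
Variable R : realType.

Definition is_dist (X : finType) (p : X -> R) : Prop :=
  (forall x, 0 <= p x) /\ \sum_(x : X) p x = 1.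

Record env := Env {
  eS : fpType;
  eA : fpType;
  eT : eS -> eA -> eS -> R;
  eI : eS -> R;
  eT_dist : forall s a, is_dist (eT s a);
  eI_dist : is_dist eI }.

Record policy (E : env) := Policy {
  pol :> eS E -> eA E -> R;
  pol_dist : forall s, is_dist (pol s) }.

(* Trajectories Xi = S x (A x S)^omega, with the product of discrete
   topologies.  xi = (s_0, w) with w t = (a_t, s_{t+1}). *)
Definition Xi (E : env) : Type :=
  (discrete_topology (eS E) *
   prod_topology (fun _ : nat => discrete_topology (eA E * eS E)))%type.

Definition XiM (E : env) := g_sigma_algebraType (@open (Xi E)).

Definition st (E : env) (xi : Xi E) (t : nat) : eS E :=
  match t with 0 => xi.1 | t'.+1 => (xi.2 t').2 end.
Definition act (E : env) (xi : Xi E) (t : nat) : eA E := (xi.2 t).1.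

(* P is the distribution of trajectories generated under pi:
   s_0 ~ I, a_t ~ pi(s_t), s_{t+1} ~ T(s_t,a_t)  (finite-dimensional
   cylinder probabilities, which determine the measure uniquely). *)
Definition traj_measure (E : env) (pi : policy E)
  (P : probability (XiM E) R) : Prop :=
  forall (n : nat) (ss : nat -> eS E) (aa : nat -> eA E),
    P [set xi : XiM E | forall t, (t <= n)%N ->
         st xi t = ss t /\ ((t < n)%N -> act xi t = aa t)] =
    (eI (ss 0%N) *
     \prod_(t < n) (pi (ss t) (aa t) * eT (ss t) (aa t) (ss t.+1)))%:E.

Definition pref (E : env) := policy E -> policy E -> Prop.

Definition total_preorder (E : env) (ge : pref E) : Prop :=
  (forall p, ge p p) /\
  (forall p q r, ge p q -> ge q r -> ge p r) /\
  (forall p q, ge p q \/ ge q p).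

Definition disc_return (E : env) (Rw : eS E -> eA E -> eS E -> R)
  (gamma : R) (xi : Xi E) : R :=
  limn (fun n => \sum_(t < n)
          gamma ^+ t * Rw (st xi t) (act xi t) (st xi t.+1)).

Definition J_ONMR (E : env) (Rw : eS E -> eA E -> eS E -> R) (f : R -> R)
  (gamma : R) (P : probability (XiM E) R) : R :=
  f (fine (\int[P]_(xi in [set: XiM E]) (disc_return Rw gamma xi)%:E)%E).

Definition in_Ord_ONMR (E : env) (ge : pref E) : Prop :=
  exists (Rw : eS E -> eA E -> eS E -> R) (f : R -> R) (gamma : R),
    0 <= gamma < 1 /\
    forall (p1 p2 : policy E) (P1 P2 : probability (XiM E) R),
      traj_measure p1 P1 -> traj_measure p2 P2 ->
      (ge p1 p2 <-> J_ONMR Rw f gamma P2 <= J_ONMR Rw f gamma P1).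

Definition in_Ord_FTR (E : env) (ge : pref E) : Prop :=
  exists f : XiM E -> R,
    measurable_fun [set: XiM E] f /\
    (forall (p : policy E) (P : probability (XiM E) R),
       traj_measure p P -> P.-integrable [set: XiM E] (EFin \o f)) /\
    forall (p1 p2 : policy E) (P1 P2 : probability (XiM E) R),
      traj_measure p1 P1 -> traj_measure p2 P2 ->
      (ge p1 p2 <->
       (\int[P2]_(xi in [set: XiM E]) (f xi)%:E <=
        \int[P1]_(xi in [set: XiM E]) (f xi)%:E)%E).

End Defs.

(* With gamma = 0 and reward [a_0], the ONMR value of a policy is the
   probability q of taking action true in the initial state, and any
   f(q) is allowed; take the non-monotone f(q) = q (1 - q).  An FTR value,
   being an expectation, is affine along the mixture of the two
   deterministic runs obtained by playing action true with probability q.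
   The preference ranks q = 0 and q = 1 equally, forcing that affine map to
   be constant, yet it ranks q = 1/2 strictly above both. *)
From HB Require Import structures.
From mathcomp Require Import all_boot all_order all_algebra.
From mathcomp Require Import all_classical all_reals all_analysis.
From mathcomp Require Import lra.

Import Order.TTheory GRing.Theory Num.Theory.
Local Open Scope classical_set_scope.
Local Open Scope ring_scope.

HB.instance Definition _ := isPointed.Build bool true.

Section trajectories.
Context {R : realType} {E : env R}.

Definition cylinder (n : nat) (ss : nat -> eS E) (aa : nat -> eA E) :
    set (XiM E) :=
  [set xi | forall t, (t <= n)%N -> st xi t = ss t /\ ((t < n)%N -> act xi t = aa t)].

Lemma cylinder0 ss aa : cylinder 0 ss aa = [set xi | st xi 0 = ss 0%N].
Proof.
apply/seteqP; split=> xi /=; first by move=> /(_ 0%N isT) [].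
by move=> xi0 [|t] // _; split.
Qed.

Lemma cylinderS n ss aa : cylinder n.+1 ss aa =
  cylinder n ss aa `&` [set xi | act xi n = aa n] `&` [set xi | st xi n.+1 = ss n.+1].
Proof.
apply/seteqP; split=> xi /=.
  move=> C; split; last by case: (C n.+1 (leqnn _)).
  split; last by case: (C n (leqnSn n)) => _; apply.
  by move=> t tn; case: (C t (leqW tn)) => xit axit; split=> // /ltnW; apply: axit.
move=> [[C an] sn] t; rewrite leq_eqVlt => /orP[/eqP->|].
  by split=> //; rewrite ltnn.
move=> tn; case: (C t tn) => xit axit; split=> //.
by rewrite ltnS leq_eqVlt => /orP[/eqP->|/axit].
Qed.

Lemma continuous_step t : continuous (fun xi : Xi E => xi.2 t).
Proof.
move=> xi; apply: (@continuous_comp _ _ _ (fun xi : Xi E => xi.2) (proj t)).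
  by case: xi => s w; apply: cvg_snd.
exact: proj_continuous.
Qed.

Lemma measurable_st t (B : set (eS E)) : measurable [set xi : XiM E | B (st xi t)].
Proof.
apply: sub_gen_smallest; case: t => [|t] /=.
  apply: (@open_comp _ _ fst (B : set (discrete_topology (eS E)))); last first.
    exact: discrete_open.
  by move=> [s w] _; apply: cvg_fst.
apply: (@open_comp _ _ (fun xi : Xi E => xi.2 t)
  (fun p : discrete_topology (eA E * eS E) => B p.2)); last exact: discrete_open.
by move=> xi _; apply: continuous_step.
Qed.

Lemma measurable_act t (B : set (eA E)) : measurable [set xi : XiM E | B (act xi t)].
Proof.
apply: sub_gen_smallest.
apply: (@open_comp _ _ (fun xi : Xi E => xi.2 t)
  (fun p : discrete_topology (eA E * eS E) => B p.1)); last exact: discrete_open.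
by move=> xi _; apply: continuous_step.
Qed.

Lemma measurable_cylinder n ss aa : measurable (cylinder n ss aa).
Proof.
elim: n => [|n IHn]; first by rewrite cylinder0; apply: (measurable_st 0 (eq^~ _)).
rewrite cylinderS; apply: measurableI; last exact: (measurable_st _ (eq^~ _)).
by apply: measurableI => //; apply: (measurable_act _ (eq^~ _)).
Qed.

Lemma disc_return0 (Rw : eS E -> eA E -> eS E -> R) (xi : Xi E) :
  disc_return Rw 0 xi = Rw (st xi 0) (act xi 0) (st xi 1).
Proof.
apply: norm_lim_near_cst; exists 1%N => // -[|n] // _.
by rewrite big_ord_recl expr0 mul1r big1 ?addr0 // => i _; rewrite exprS !mul0r.
Qed.

Lemma total_preorder_value (J : policy E -> R) :
  total_preorder (fun p q : policy E => J q <= J p).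
Proof.
split=> [p|]; first exact: lexx.
split=> [p q r pq qr|p q]; first exact: le_trans qr pq.
by case/orP: (le_total (J q) (J p)); [left|right].
Qed.

End trajectories.

Section coin.
Variable R : realType.

Definition coin_trans (s a s' : bool) : R := (~~ s')%:R.
Definition coin_init (s : bool) : R := s%:R.

Lemma coin_trans_dist s a : is_dist (coin_trans s a).
Proof. by split=> [x|]; rewrite ?ler0n // big_bool /coin_trans /= add0r. Qed.

Lemma coin_init_dist : is_dist coin_init.
Proof. by split=> [x|]; rewrite ?ler0n // big_bool /coin_init /= addr0. Qed.

(* The run starts in state [true], and every transition leads to [false]. *)
Definition coin_env : env R :=
  @Env R bool bool coin_trans coin_init coin_trans_dist coin_init_dist.

Lemma coin_first_action_prob (pi : policy coin_env) (P : probability (XiM coin_env) R) :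
  traj_measure pi P -> P [set xi : XiM coin_env | act xi 0 = true] = (pi true true)%:E.
Proof.
move=> HP; set A := [set xi : XiM coin_env | act xi 0 = true].
have mA : measurable A := @measurable_act _ coin_env 0 (eq^~ true).
(* The two one-step cylinders below lie in [A] and in its complement, and their
   probabilities already add up to 1. *)
pose ss : nat -> eS coin_env := fun t => t == 0%N.
have cyl_prob (a : eA coin_env) : P (cylinder 1 ss (fun=> a)) = (pi true a)%:E.
  by rewrite [LHS]HP big_ord1 /= /coin_init /coin_trans /= mul1r mulr1.
have cylA : cylinder 1 ss (fun=> true) `<=` A.
  by rewrite cylinderS => xi [[_ a0] _].
have cylNA : cylinder 1 ss (fun=> false) `<=` ~` A.
  by rewrite cylinderS => xi [[_ a0] _]; rewrite /A /setC /= a0.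
have geA : ((pi true true)%:E <= P A)%E.
  rewrite -cyl_prob; apply: le_measure cylA; rewrite inE //.
  exact: measurable_cylinder.
have geNA : ((pi true false)%:E <= 1 - P A)%E.
  rewrite -cyl_prob -(probability_setC P mA); apply: le_measure cylNA;
    rewrite inE; [exact: measurable_cylinder|exact: measurableC].
have [_] := pol_dist pi true; rewrite big_bool /= => pi_sum.
rewrite -(fineK (fin_num_measure P A mA)) -EFinB !lee_fin in geA geNA *.
by congr EFin; apply/eqP; rewrite eq_le geA /=; lra.
Qed.

Definition coin_reward : eS coin_env -> eA coin_env -> eS coin_env -> R :=
  fun _ (a : bool) _ => a%:R.

Lemma coin_expected_return (pi : policy coin_env) (P : probability (XiM coin_env) R) :
  traj_measure pi P ->
  fine (\int[P]_(xi in [set: XiM coin_env]) (disc_return coin_reward 0 xi)%:E)%E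
  = pi true true.
Proof.
move=> HP; set A := [set xi : XiM coin_env | act xi 0 = true].
have mA : measurable A := @measurable_act _ coin_env 0 (eq^~ true).
have -> : (fun xi : XiM coin_env => (disc_return coin_reward 0 xi)%:E)
    = (fun xi => (\1_A xi)%:E).
  apply: funext => xi; rewrite disc_return0 indicE /=.
  by case a0: (act xi 0); [rewrite mem_set|rewrite memNset // /A /= a0].
rewrite integral_indic // setIT.
exact: (congr1 fine (coin_first_action_prob _ _ HP)).
Qed.

Definition hump (x : R) : R := x * (1 - x).

Definition hump_pref : pref coin_env :=
  fun p1 p2 => hump (p2 true true) <= hump (p1 true true).

Lemma hump_pref_total : total_preorder hump_pref.
Proof. exact: total_preorder_value (fun p : policy coin_env => hump (p true true)). Qed.

Lemma hump_pref_ONMR : in_Ord_ONMR hump_pref.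
Proof.
exists coin_reward, hump, 0; split; first by rewrite lexx ltr01.
move=> p1 p2 P1 P2 H1 H2.
by rewrite /J_ONMR (coin_expected_return _ _ H1) (coin_expected_return _ _ H2).
Qed.

(* In state [false] the action is forced to be [true], so that the run is
   determined by the first action. *)
Definition coin_pol (p : R) (s a : bool) : R :=
  if s then (if a then p else 1 - p) else a%:R.

Lemma coin_pol_dist p : 0 <= p <= 1 -> forall s, is_dist (coin_pol p s).
Proof.
move=> /andP[p0 p1] s; split=> [a|].
  by case: s; case: a; rewrite /coin_pol ?subr_ge0 ?ler0n.
by rewrite big_bool /coin_pol; case: s; rewrite /= ?subrKC ?addr0.
Qed.

Definition coin {p : R} (hp : 0 <= p <= 1) : policy coin_env :=
  @Policy R coin_env (coin_pol p) (coin_pol_dist p hp).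

Definition coin_path (b : bool) : XiM coin_env :=
  (true : discrete_topology bool,
   fun t => (if t == 0%N then (b, false) else (true, false))
     : discrete_topology (bool * bool)).

Lemma coin_path_cylinder0 b (ss : nat -> eS coin_env) (aa : nat -> eA coin_env) :
  (coin_path b \in cylinder 0 ss aa) = ss 0%N.
Proof.
rewrite cylinder0; apply/idP/idP => [/set_mem <-|s0] //.
by apply: mem_set; rewrite /= s0.
Qed.

Lemma coin_path_cylinderS b m (ss : nat -> eS coin_env) (aa : nat -> eA coin_env) :
  (coin_path b \in cylinder m.+1 ss aa) =
  [&& coin_path b \in cylinder m ss aa,
      aa m == (if m == 0%N then b else true) & ~~ ss m.+1].
Proof.
have act_m : act (coin_path b) m = if m == 0%N then b else true.
  by rewrite /act /=; case: (m == 0%N).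
rewrite cylinderS; apply/idP/idP.
  move=> /set_mem[[C /= <-] /= <-].
  by rewrite mem_set // act_m eqxx; case: (m == 0%N).
move=> /and3P[C /eqP am /negbTE sm]; apply/mem_set; split.
  by split; [exact: set_mem|rewrite /= act_m am].
by rewrite /= sm; case: (m == 0%N).
Qed.

Lemma coin_cylinder_prob p n (ss : nat -> eS coin_env) (aa : nat -> eA coin_env) :
  coin_init (ss 0%N) *
    \prod_(t < n) (coin_pol p (ss t) (aa t) * coin_trans (ss t) (aa t) (ss t.+1))
  = p * (coin_path true \in cylinder n ss aa)%:R
    + (1 - p) * (coin_path false \in cylinder n ss aa)%:R.
Proof.
elim: n => [|n IHn].
  rewrite big_ord0 mulr1 !coin_path_cylinder0 /coin_init.
  by case: (ss 0%N); rewrite /= ?mulr1 ?mulr0 ?subrKC ?addr0.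
rewrite big_ord_recr /= mulrA IHn !coin_path_cylinderS /coin_pol /coin_trans.
case: n {IHn} => [|n].
  rewrite !coin_path_cylinder0.
  by case: (ss 0%N); case: (aa 0%N); case: (ss 1%N) => /=;
    rewrite ?(mulr0, mulr1, mul0r, mul1r, addr0, add0r, subrKC).
have [sn|sn] := boolP (ss n.+1).
  have notin b : coin_path b \notin cylinder n.+1 ss aa.
    by rewrite coin_path_cylinderS sn !andbF.
  by rewrite !(negbTE (notin _)) /= !(mulr0, mul0r, addr0).
by case: (coin_path true \in _); case: (coin_path false \in _);
  case: (aa n.+1); case: (ss n.+2) => /=;
  rewrite ?(mulr0, mulr1, mul0r, mul1r, addr0, add0r).
Qed.

Lemma traj_measure_coin p (hp : 0 <= p <= 1) (P : probability (XiM coin_env) R) :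
  (forall A, P A = (p * (coin_path true \in A)%:R
                    + (1 - p) * (coin_path false \in A)%:R)%:E) ->
  traj_measure (coin hp) P.
Proof. by move=> PE n ss aa; rewrite [LHS]PE -coin_cylinder_prob. Qed.

Lemma bool_itv01 (b : bool) : 0 <= (b%:R : R) <= 1.
Proof. by case: b; rewrite /= lexx ler01. Qed.

Lemma traj_measure_dirac b : traj_measure (coin (bool_itv01 b)) \d_(coin_path b).
Proof.
apply: traj_measure_coin => A; rewrite /= diracE.
by case: b; rewrite /= ?subrr ?subr0 ?mul1r ?mul0r ?addr0 ?add0r.
Qed.

Definition coin_path_m : bool -> XiM coin_env := coin_path.

Lemma measurable_coin_path : measurable_fun [set: bool] coin_path_m.
Proof. by move=> _ B _. Qed.

HB.instance Definition _ :=
  isMeasurableFun.Build _ _ bool (XiM coin_env) coin_path_m measurable_coin_path.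

Definition coin_traj (p : R) : probability (XiM coin_env) R :=
  distribution (bernoulli_prob p) coin_path_m.

Lemma traj_measure_coin_traj p (hp : 0 <= p <= 1) :
  traj_measure (coin hp) (coin_traj p).
Proof.
apply: traj_measure_coin => A.
by rewrite /coin_traj /= /distribution /pushforward bernoulli_probE // !diracE.
Qed.

Lemma hump_pref_not_FTR : ~ in_Ord_FTR hump_pref.
Proof.
move=> [f [mf [_ prefE]]].
have mEf := (measurable_realfun.measurable_EFinP _ f).2 mf.
have J_dirac b :
    (\int[\d_(coin_path b)]_(xi in [set: XiM coin_env]) (f xi)%:E
     = (f (coin_path b))%:E)%E.
  by rewrite integral_dirac // diracT mul1e.
have pref_ends b : hump_pref (coin (bool_itv01 b)) (coin (bool_itv01 (~~ b))).
  by rewrite /hump_pref /hump; case: b => /=; lra.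
have f_ends : f (coin_path true) = f (coin_path false).
  have := pref_ends true; have := pref_ends false.
  rewrite !(prefE _ _ _ _ (traj_measure_dirac _) (traj_measure_dirac _)) !J_dirac.
  by rewrite !lee_fin /= => le1 le2; apply/eqP; rewrite eq_le le1 le2.
have f_path : (EFin \o f) \o coin_path_m = cst (f (coin_path false))%:E.
  by apply/funext => -[]; rewrite /= ?f_ends.
have half01 : 0 <= (2^-1 : R) <= 1 by apply/andP; split; lra.
have J_half : (\int[coin_traj 2^-1]_(xi in [set: XiM coin_env]) (f xi)%:E
               = (f (coin_path false))%:E)%E.
  rewrite integral_pushforward //; last first.
    by rewrite f_path; apply: finite_measure_integrable_cst.
  rewrite f_path integral_cst // preimage_setT.
  by rewrite [X in (_ * X)%E](_ : _ = 1%E) ?mule1 //; apply: probability_setT.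
have : hump_pref (coin (bool_itv01 false)) (coin half01).
  apply/(prefE _ _ _ _ (traj_measure_dirac false) (traj_measure_coin_traj _ half01)).
  by rewrite J_dirac J_half.
by rewrite /hump_pref /hump /=; lra.
Qed.

End coin.

Theorem mainTheorem14 (R : realType) :
  exists (E : env R) (ge : pref E),
    total_preorder ge /\ in_Ord_ONMR ge /\ ~ in_Ord_FTR ge.
Proof.
exists (coin_env R), (@hump_pref R).
split; first exact: hump_pref_total.
split; [exact: hump_pref_ONMR | exact: hump_pref_not_FTR].
Qed.
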